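(* Fix integers $d\ge 2$ and $n$ with $d+2\leq n\leq 2d$. Every $n$-point spherical code $X$ in $S^{d-1}$ has no Tammes rattler.
   Context: $[n]=\{1,\ldots,n\}$. For a configuration $X=\{x_i\}_{i\in[n]}$ in the unit sphere $S^{d-1}\subseteq\mathbb{R}^d$, $\alpha(X):=\max_{i\neq j}\langle x_i,x_j\rangle$. A spherical code is an $n$-point configuration in $S^{d-1}$ minimizing $\alpha$. A Tammes rattler of $X$ is an index $j\in[n]$ with $\max_{i\in[n]\setminus\{j\}}\langle x_i,x_j\rangle<\alpha(X)$. *)

From mathcomp Require Import all_boot all_order all_algebra.
From mathcomp Require Import reals.
Set Implicit Arguments. Unset Strict Implicit. Unset Printing Implicit Defensive.
Import Order.TTheory GRing.Theory Num.Theory.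
Local Open Scope ring_scope.

Definition inner (R : realType) (d : nat) (x y : 'rV[R]_d) : R :=
  \sum_(k < d) x 0 k * y 0 k.

Definition on_sphere (R : realType) (d : nat) (x : 'rV[R]_d) : Prop :=
  inner x x = 1.

Definition sph_config (R : realType) (d n : nat) (X : 'I_n -> 'rV[R]_d) : Prop :=
  forall i, on_sphere (X i).

(* alpha(X) = max_{i <> j} <x_i, x_j>.  Inner products of unit vectors are
   >= -1, so -1 is a neutral seed for the max whenever n >= 2. *)
Definition alpha (R : realType) (d n : nat) (X : 'I_n -> 'rV[R]_d) : R :=
  \big[Num.max/(-1)]_(p : 'I_n * 'I_n | p.1 != p.2) inner (X p.1) (X p.2).

Definition spherical_code (R : realType) (d n : nat) (X : 'I_n -> 'rV[R]_d) : Prop :=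
  sph_config X /\
  forall Y : 'I_n -> 'rV[R]_d, sph_config Y -> alpha X <= alpha Y.

Definition tammes_rattler (R : realType) (d n : nat) (X : 'I_n -> 'rV[R]_d)
    (j : 'I_n) : Prop :=
  \big[Num.max/(-1)]_(i : 'I_n | i != j) inner (X i) (X j) < alpha X.

From mathcomp Require Import all_boot all_order all_algebra.
From mathcomp Require Import reals.
Local Open Scope ring_scope.
Import Order.TTheory GRing.Theory Num.Theory.

(* Since n <= 2d, the n points among the cross-polytope vertices +-e_k have
   pairwise non-positive inner products, so a spherical code X has alpha(X) <= 0.
   If x_j were a rattler, the remaining n - 1 >= d + 1 points would have pairwise
   non-positive inner products and strictly negative inner products with x_j.
   Such vectors are linearly independent: in a relation, the positive part u and
   the negated non-positive part coincide, so <u,u> <= 0 and u = 0, while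
   <u,x_j> < 0 as soon as some coefficient is positive; the same applies to the
   negated relation.  But d + 1 vectors of R^d are dependent. *)

Section InnerProduct.
Variables (R : realType) (d : nat).
Implicit Types x y w : 'rV[R]_d.

Lemma innerE x y : inner x y = (x *m y^T) 0 0.
Proof. by rewrite /inner !mxE; apply: eq_bigr => k _; rewrite mxE. Qed.

Lemma innerC x y : inner x y = inner y x.
Proof. by rewrite /inner; apply: eq_bigr => k _; rewrite mulrC. Qed.

Lemma inner0l w : inner 0 w = 0.
Proof. by rewrite /inner big1 // => k _; rewrite mxE mul0r. Qed.

Lemma inner_sumZl (I : Type) (r : seq I) (P : pred I) (a : I -> R)
    (y : I -> 'rV[R]_d) w :
  inner (\sum_(i <- r | P i) a i *: y i) w = \sum_(i <- r | P i) a i * inner (y i) w.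
Proof.
rewrite innerE mulmx_suml summxE; apply: eq_bigr => i _.
by rewrite -scalemxAl mxE innerE.
Qed.

Lemma inner_self_le0 x : inner x x <= 0 -> x = 0.
Proof.
move=> xx_le0; have sq_ge0 k : true -> 0 <= x 0 k * x 0 k by rewrite -expr2 sqr_ge0.
have xx0 : inner x x = 0 by apply/eqP; rewrite eq_le xx_le0 sumr_ge0.
apply/rowP => k; apply/eqP; rewrite mxE -[_ == 0]orbb -mulf_eq0.
exact/eqP/(psumr_eq0P sq_ge0 xx0).
Qed.

End InnerProduct.

Section ObtuseFamily.
Variables (R : realType) (d m : nat) (y : 'I_m -> 'rV[R]_d) (w : 'rV[R]_d).
Hypothesis inner_pair_le0 : forall i k, i != k -> inner (y i) (y k) <= 0.
Hypothesis inner_w_lt0 : forall i, inner (y i) w < 0.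

Lemma obtuse_relation_le0 (c : 'I_m -> R) :
  \sum_i c i *: y i = 0 -> forall i, c i <= 0.
Proof.
move=> rel; pose u := \sum_(i | 0 < c i) c i *: y i.
have u_neg : u = \sum_(k | ~~ (0 < c k)) (- c k) *: y k.
  move: rel; rewrite (bigID (fun i => 0 < c i)) /= => rel.
  under eq_bigr do rewrite scaleNr; rewrite sumrN; apply/eqP.
  by rewrite -addr_eq0 /u rel.
have u0 : u = 0.
  apply: inner_self_le0; rewrite {1}/u inner_sumZl; apply: sumr_le0 => i ci_gt0.
  rewrite u_neg innerC inner_sumZl; apply: mulr_ge0_le0; first exact: ltW.
  apply: sumr_le0 => k ck_le0; apply: mulr_ge0_le0; first by rewrite oppr_ge0 leNgt.
  by apply: inner_pair_le0; apply: contraNneq ck_le0 => ->.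
move=> i; rewrite leNgt; apply/negP => ci_gt0.
have : inner u w < 0.
  rewrite /u inner_sumZl (bigD1 i) //= ltr_wnDr ?pmulr_rlt0 //.
  by apply: sumr_le0 => k /andP[ck_gt0 _]; rewrite mulr_ge0_le0 ?ltW.
by rewrite u0 inner0l ltxx.
Qed.

Lemma obtuse_relation_eq0 (c : 'I_m -> R) :
  \sum_i c i *: y i = 0 -> forall i, c i = 0.
Proof.
move=> rel i; apply/eqP; rewrite eq_le obtuse_relation_le0 //= -oppr_le0.
apply: (obtuse_relation_le0 (fun k => - c k)).
by under eq_bigr do rewrite scaleNr; rewrite sumrN rel oppr0.
Qed.

Lemma obtuse_row_free : row_free (\matrix_i y i).
Proof.
rewrite -kermx_eq0; apply/rowV0Pn => -[v /sub_kermxP vB0]; apply/negP/negPn.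
apply/eqP/rowP => i; rewrite mxE; apply: obtuse_relation_eq0 i.
by rewrite -[RHS]vB0 mulmx_sum_row; apply: eq_bigr => k _; rewrite rowK.
Qed.

Lemma obtuse_card_le : (m <= d)%N.
Proof. by rewrite -(eqP obtuse_row_free) rank_leq_col. Qed.

End ObtuseFamily.

Section Alpha.
Variables (R : realType) (d n : nat) (X : 'I_n -> 'rV[R]_d).

Lemma inner_le_alpha i k : i != k -> inner (X i) (X k) <= alpha X.
Proof. exact: (le_bigmax_cond _ (fun p : 'I_n * 'I_n => inner (X p.1) (X p.2)) (j := (i, k))). Qed.

Lemma tammes_rattler_inner_lt j :
  tammes_rattler X j -> forall i, i != j -> inner (X i) (X j) < alpha X.
Proof. by move=> rattler i ij; apply: le_lt_trans rattler; apply: le_bigmax_cond. Qed.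

End Alpha.

Section CrossPolytope.
Variables (R : realType) (d n : nat).
Hypothesis d_gt0 : (0 < d)%N.
Hypothesis n_le2d : (n <= 2 * d)%N.

Definition cross_sign (i : 'I_n) : R := if (i < d)%N then 1 else -1.

Definition cross_polytope (i : 'I_n) : 'rV[R]_d :=
  cross_sign i *: delta_mx 0 (Ordinal (ltn_pmod i d_gt0)).

Lemma inner_cross_polytope i k :
  inner (cross_polytope i) (cross_polytope k) =
  cross_sign i * cross_sign k * ((i %% d)%N == (k %% d)%N)%:R.
Proof.
rewrite /inner (bigD1 (Ordinal (ltn_pmod i d_gt0))) //= big1 => [|l li].
  by rewrite !mxE !eqxx mulr1 addr0 mulrA.
by rewrite !mxE (negbTE li) andbF mulr0 mul0r.
Qed.

Lemma cross_sign_mul_le0 (i k : 'I_n) :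
  i != k -> (i %% d)%N = (k %% d)%N -> cross_sign i * cross_sign k <= 0.
Proof.
move=> ik mod_ik; have lt2 (l : 'I_n) : (l %/ d < 2)%N.
  by rewrite ltn_divLR //; apply: leq_trans (ltn_ord l) n_le2d.
have sign_div (l : 'I_n) : (l < d)%N = (l %/ d == 0)%N.
  by rewrite -[RHS]negbK -lt0n divn_gt0 // -ltnNge.
rewrite /cross_sign !sign_div; case: ifP => i0; case: ifP => k0;
  rewrite ?mulrNN ?mul1r ?mulr1 ?lerN10 //; exfalso; move/eqP: ik; apply.
(* equal signs force equal quotients i %/ d = k %/ d, both in {0, 1} *)
all: apply: val_inj; rewrite /= (divn_eq i d) (divn_eq k d) mod_ik.
  by rewrite (eqP i0) (eqP k0).
by move: (lt2 i) (lt2 k) i0 k0; case: (i %/ d)%N => [|[|]]; case: (k %/ d)%N => [|[|]].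
Qed.

Lemma cross_polytope_sph_config : sph_config cross_polytope.
Proof.
move=> i; rewrite /on_sphere inner_cross_polytope eqxx mulr1 /cross_sign.
by case: ifP; rewrite ?mulr1 ?mulrNN ?mulr1.
Qed.

Lemma alpha_cross_polytope_le0 : alpha cross_polytope <= 0.
Proof.
apply: bigmax_le; first by rewrite lerN10.
move=> [i k] /= ik; rewrite inner_cross_polytope.
by case: eqP => [mod_ik | _]; rewrite ?mulr1 ?cross_sign_mul_le0 ?mulr0.
Qed.

End CrossPolytope.

Lemma spherical_code_alpha_le0 {R : realType} {d n : nat} (X : 'I_n -> 'rV[R]_d) :
  (0 < d)%N -> (n <= 2 * d)%N -> spherical_code X -> alpha X <= 0.
Proof.
move=> d_gt0 n_le2d [_ X_min].
apply: le_trans (X_min _ (cross_polytope_sph_config R d n d_gt0)) _.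
exact: alpha_cross_polytope_le0.
Qed.

Theorem lemma9 (R : realType) (d n : nat) :
  (2 <= d)%N -> (d + 2 <= n)%N -> (n <= 2 * d)%N ->
  forall X : 'I_n -> 'rV[R]_d, spherical_code X ->
  forall j : 'I_n, ~ tammes_rattler X j.
Proof.
move=> d_ge2 n_ge n_le2d X X_code j rattler.
have alpha_le0 := spherical_code_alpha_le0 X (ltnW d_ge2) n_le2d X_code.
have : (n.-1 <= d)%N.
  apply: (@obtuse_card_le R d n.-1 (fun i => X (lift j i)) (X j)).
    move=> i k ik; apply: le_trans alpha_le0; apply: inner_le_alpha.
    by rewrite (inj_eq (@lift_inj _ j)).
  move=> i; apply: lt_le_trans alpha_le0; apply: tammes_rattler_inner_lt rattler _ _.
  by rewrite eq_sym neq_lift.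
by rewrite -subn1 leq_subLR leqNgt add1n -addn2 n_ge.
Qed.
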